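(* Let $\kappa$ be a regular cardinal, $\lambda$ an infinite cardinal, and $X\subseteq\kappa^\kappa$. If there is an $L^*_{\kappa^+\lambda}$-sentence $\varphi$ such that for all $\eta\in\kappa^\kappa$, $\eta\in X$ if and only if $M^*_\eta\models\varphi$, then $X$ is $(\kappa,\kappa^{<\lambda})$-Borel.
   Context: Coding of structures: $L=\{Q_m\mid m<\omega\}$ is a countable relational vocabulary and $\pi:\kappa^{<\omega}\to\kappa$ a fixed bijection. For $\eta\in\kappa^\kappa$, $M_\eta$ is the $L$-structure with domain $\kappa$ in which $(a_1,\dots,a_n)\in Q_m^{M_\eta}$ iff $Q_m$ has arity $n$ and $\eta(\pi(m,a_1,\dots,a_n))>0$. For each $n<\omega$ fix a well-ordering $<^n$ of $\kappa^n$ of order type $\kappa$; for each cardinal $\theta<\kappa$ let $R^n_\theta=\{a\in\kappa^n\mid|\{b\mid b<^n a\}|=\theta\}$. $L^+=\{<^n,R^n_\theta\mid n<\omega,\theta<\kappa\}$, $L^*=L\cup L^+$, and $M^*_\eta$ is the expansion of $M_\eta$ to $L^*$ interpreting these symbols as described. $L^*_{\kappa^+\lambda}$ is the infinitary logic in vocabulary $L^*$ with conjunctions/disjunctions of at most $\kappa$ formulas and quantification over fewer than $\lambda$ variables at once. Topology: basic $\kappa$-open sets are $N_\eta=\{\zeta\in\kappa^\kappa\mid\eta\subseteq\zeta\}$ for $\eta:Y\to\kappa$, $Y\subseteq\kappa$, $|Y|<\kappa$, and $\emptyset$. For a cardinal $\mu$, the $(\kappa,\mu)$-Borel sets form the smallest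 class containing the basic $\kappa$-open sets and closed under complements, unions of at most $\mu$ sets and intersections of at most $\mu$ sets. *)

From Stdlib Require List.
From mathcomp Require Import all_boot.
Set Implicit Arguments.
Unset Strict Implicit.
Unset Printing Implicit Defensive.

Definition card_le (A B : Type) : Prop := exists f : A -> B, injective f.
Definition card_lt (A B : Type) : Prop := ~ card_le B A.

Definition well_order (T : Type) (lt : T -> T -> Prop) : Prop :=
  well_founded lt /\
  (forall x y z, lt x y -> lt y z -> lt x z) /\
  (forall x y, lt x y \/ x = y \/ lt y x).

Definition seg (T : Type) (lt : T -> T -> Prop) (x : T) : Type := {y : T | lt y x}.

(* (T, lt) is a well-order whose order type is a cardinal (initial ordinal) *)
Definition is_cardinal (T : Type) (lt : T -> T -> Prop) : Prop :=
  well_order lt /\ forall x : T, ~ card_le T (seg lt x).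

Definition infinite_type (T : Type) : Prop := card_le nat T.

Definition regular (T : Type) (lt : T -> T -> Prop) : Prop :=
  forall A : T -> Prop, card_lt {x | A x} T -> exists b, forall x, A x -> lt x b.

Definition cardinal_elt (T : Type) (lt : T -> T -> Prop) (th : T) : Prop :=
  forall y, lt y th -> ~ card_le (seg lt th) (seg lt y).

Definition finite_ordinals (T : Type) (lt : T -> T -> Prop) (iota : nat -> T) : Prop :=
  (forall x, ~ lt x (iota 0)) /\
  (forall n, lt (iota n) (iota n.+1) /\
             forall x, ~ (lt (iota n) x /\ lt x (iota n.+1))).

(* kappa^{<lambda} as the type  Sigma_{a < lambda} (a -> kappa) *)
Definition KLess (K L : Type) (ltL : L -> L -> Prop) : Type :=
  {a : L & seg ltL a -> K}.

Inductive borel (K M : Type) : ((K -> K) -> Prop) -> Prop :=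
| borel_empty : borel M (fun _ => False)
| borel_basic (Y : K -> Prop) (eta : K -> K) :
    card_lt {x | Y x} K ->
    borel M (fun zeta => forall x, Y x -> zeta x = eta x)
| borel_compl (A : (K -> K) -> Prop) :
    borel M A -> borel M (fun zeta => ~ A zeta)
| borel_union (J : Type) (F : J -> (K -> K) -> Prop) :
    card_le J M -> (forall i, borel M (F i)) ->
    borel M (fun zeta => exists i, F i zeta)
| borel_inter (J : Type) (F : J -> (K -> K) -> Prop) :
    card_le J M -> (forall i, borel M (F i)) ->
    borel M (fun zeta => forall i, F i zeta)
| borel_ext (A B : (K -> K) -> Prop) :
    borel M A -> (forall zeta, A zeta <-> B zeta) -> borel M B.

Inductive formula (K V : Type) : Type :=
| fEq (x y : V)
| fQ (m : nat) (xs : seq V)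
| fLt (xs ys : seq V)                     (* xs <^n ys, n = size xs *)
| fR (theta : K) (xs : seq V)             (* R^n_theta(xs), n = size xs *)
| fNot (phi : formula K V)
| fAnd (J : Type) (phis : J -> formula K V)
| fOr (J : Type) (phis : J -> formula K V)
| fEx (W : V -> Prop) (phi : formula K V)
| fAll (W : V -> Prop) (phi : formula K V).

Section Logic.
Variables (K L V : Type) (ltK : K -> K -> Prop) (ltL : L -> L -> Prop)
          (ar : nat -> nat).

Fixpoint in_logic (phi : formula K V) : Prop :=
  match phi with
  | fEq _ _ => True
  | fQ m xs => size xs = ar m
  | fLt xs ys => 0 < size xs /\ size ys = size xs
  | fR th xs => 0 < size xs /\ cardinal_elt ltK th
  | fNot p => in_logic p
  | @fAnd _ _ J ps => card_le J K /\ forall i, in_logic (ps i)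
  | @fOr _ _ J ps => card_le J K /\ forall i, in_logic (ps i)
  | fEx W p => card_lt {v | W v} L /\ in_logic p
  | fAll W p => card_lt {v | W v} L /\ in_logic p
  end.

Fixpoint free (phi : formula K V) (v : V) : Prop :=
  match phi with
  | fEq x y => v = x \/ v = y
  | fQ _ xs => List.In v xs
  | fLt xs ys => List.In v xs \/ List.In v ys
  | fR _ xs => List.In v xs
  | fNot p => free p v
  | @fAnd _ _ J ps => exists i, free (ps i) v
  | @fOr _ _ J ps => exists i, free (ps i) v
  | fEx W p => ~ W v /\ free p v
  | fAll W p => ~ W v /\ free p v
  end.

Definition sentence (phi : formula K V) : Prop := forall v, ~ free phi v.

Variables (iota : nat -> K) (pi : seq K -> K) (ltn : nat -> seq K -> seq K -> Prop).

Definition Q_int (eta : K -> K) (m : nat) (a : seq K) : Prop :=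
  size a = ar m /\ ltK (iota 0) (eta (pi (iota m :: a))).

Definition R_int (th : K) (a : seq K) : Prop :=
  exists f : {b : seq K | size b = size a /\ ltn (size a) b a} -> seg ltK th,
    bijective f.

Fixpoint sat (eta : K -> K) (s : V -> K) (phi : formula K V) : Prop :=
  match phi with
  | fEq x y => s x = s y
  | fQ m xs => Q_int eta m (map s xs)
  | fLt xs ys => ltn (size xs) (map s xs) (map s ys)
  | fR th xs => R_int th (map s xs)
  | fNot p => ~ sat eta s p
  | @fAnd _ _ J ps => forall i, sat eta s (ps i)
  | @fOr _ _ J ps => exists i, sat eta s (ps i)
  | fEx W p => exists s' : V -> K, (forall v, ~ W v -> s' v = s v) /\ sat eta s' p
  | fAll W p => forall s' : V -> K, (forall v, ~ W v -> s' v = s v) -> sat eta s' p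
  end.

Definition models (eta : K -> K) (phi : formula K V) : Prop :=
  forall s : V -> K, sat eta s phi.
End Logic.

Definition ordertype_kappa (K : Type) (ltK : K -> K -> Prop) (n : nat)
  (lt : seq K -> seq K -> Prop) : Prop :=
  exists f : {a : seq K | size a = n} -> K,
    bijective f /\ forall a b, lt (sval a) (sval b) <-> ltK (f a) (f b).

From mathcomp Require Import all_boot.
From Stdlib Require Import ClassicalEpsilon FunctionalExtensionality ProofIrrelevance Eqdep.
Set Implicit Arguments.
Unset Strict Implicit.
Unset Printing Implicit Defensive.

(* Induction on formulas, with the assignment of the variables held fixed:
   equalities and the L+-atoms do not depend on eta at all, Q_m(a) holds iff
   eta takes one of at most kappa values at a single point, conjunctions and
   disjunctions of at most kappa formulas give intersections and unions, and
   a quantifier over fewer than lambda variables ranges over kappa^{<lambda}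
   reassignments.  For a sentence, truth in M*_eta under every assignment is
   truth under one fixed assignment. *)

Lemma card_le_trans A B C : card_le A B -> card_le B C -> card_le A C.
Proof. by move=> [f injf] [g injg]; exists (g \o f); exact: inj_comp. Qed.

Lemma sval_inj A (P : A -> Prop) : injective (@sval A P).
Proof. exact: eq_sig_hprop (fun x => @proof_irrelevance (P x)). Qed.

Lemma card_le_sig A (P : A -> Prop) : card_le {x | P x} A.
Proof. by exists sval; exact: sval_inj. Qed.

Lemma card_le_of_surj A B (g : B -> A) :
  (forall a, exists b, g b = a) -> card_le A B.
Proof.
move=> surj_g.
exists (fun a => proj1_sig (constructive_indefinite_description _ (surj_g a))).
apply: (can_inj (g := g)) => a.
exact: proj2_sig (constructive_indefinite_description _ (surj_g a)).
Qed.

Lemma card_le_of_empty A B : ~ inhabited A -> card_le A B.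
Proof.
by move=> emptyA; exists (fun a => match emptyA (inhabits a) with end) => a; case: emptyA.
Qed.

Lemma infinite_not_card_le_unit T : infinite_type T -> ~ card_le T unit.
Proof.
move=> [i inj_i] [f inj_f].
have /inj_i// : i 0 = i 1 by apply: inj_f; case: (f (i 0)); case: (f (i 1)).
Qed.

Lemma infinite_singleton_small T (c : T) : infinite_type T -> card_lt {x | x = c} T.
Proof.
move=> [i inj_i] [f inj_f].
have /inj_i// : i 0 = i 1.
by apply: inj_f; apply: sval_inj; rewrite (svalP (f (i 0))) (svalP (f (i 1))).
Qed.

Lemma map_eq_in_list A B (f g : A -> B) (xs : seq A) :
  (forall x, List.In x xs -> f x = g x) -> map f xs = map g xs.
Proof.
elim: xs => //= x xs IH fg.
rewrite fg; last by left.
by rewrite IH // => y xy; apply: fg; right.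
Qed.

Section InitialSegment.
Variables (L : Type) (lt : L -> L -> Prop) (T : Type).
Hypothesis wo : well_order lt.

(* Transfinite recursion picks f a outside {f b | b < a}; if this ever fails
   at some a, then f maps seg a onto T. *)
Lemma card_le_seg : ~ card_le L T -> exists a, card_le T (seg lt a).
Proof.
case: wo => [wf [_ trich]] not_LT.
have [[a0]|emptyL] := excluded_middle_informative (inhabited L); last first.
  by case: not_LT; exact: card_le_of_empty.
have [inhT|emptyT] := excluded_middle_informative (inhabited T); last first.
  by exists a0; exact: card_le_of_empty.
apply: NNPP => small_segs.
pose F a (rec : forall b, lt b a -> T) :=
  epsilon inhT (fun t => forall b (h : lt b a), rec b h <> t).
pose f := Fix wf (fun _ => T) F.
have f_unfold a : f a = F a (fun b _ => f b).
  apply: (Fix_eq _ (fun _ => T)) => x g1 g2 eq_g.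
  by congr F; do 2 apply: functional_extensionality_dep => ?; exact: eq_g.
have f_fresh a b : lt b a -> f b <> f a.
  have [fresh|no_fresh] := classic (exists t, forall b, lt b a -> f b <> t).
    by rewrite (f_unfold a); exact: (epsilon_spec inhT _ fresh).
  case: small_segs; exists a; apply: (card_le_of_surj (g := fun b : seg lt a => f (sval b))).
  move=> t; apply: NNPP => not_hit; apply: no_fresh; exists t => c hc ft.
  by apply: not_hit; exists (exist _ c hc).
apply: not_LT; exists f => x y fxy.
by case: (trich x y) => [/f_fresh|[//|/f_fresh]]; rewrite fxy.
Qed.

Lemma card_le_fun_KLess (K : Type) : inhabited K -> ~ card_le L T ->
  card_le (T -> K) (KLess K lt).
Proof.
move=> [k0] /card_le_seg [a [g inj_g]].
pose extend (h : T -> K) (b : seg lt a) :=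
  match excluded_middle_informative (exists t, g t = b) with
  | left hit => h (proj1_sig (constructive_indefinite_description _ hit))
  | right _ => k0
  end.
exists (fun h => existT (fun a => seg lt a -> K) a (extend h)) => h1 h2 eq_h.
have eq_ext := inj_pairT2 _ _ _ _ _ eq_h.
apply: functional_extensionality => t; have := f_equal (@^~ (g t)) eq_ext; rewrite /extend.
case: excluded_middle_informative => [hit|]; last by case; exists t.
by case: constructive_indefinite_description => t' /= /inj_g ->.
Qed.

End InitialSegment.

Lemma card_le_KLess K L (ltL : L -> L -> Prop) :
  well_order ltL -> infinite_type K -> infinite_type L -> card_le K (KLess K ltL).
Proof.
move=> wo [i _] /infinite_not_card_le_unit not_Lunit.
apply: card_le_trans (card_le_fun_KLess wo (inhabits (i 0)) not_Lunit).
by exists (fun k (_ : unit) => k) => k1 k2 /(f_equal (@^~ tt)).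
Qed.

Section Borel.
Variables (K M : Type).

Lemma borel_const (P : Prop) : borel (K:=K) M (fun _ => P).
Proof.
have [p|np] := classic P.
  by apply: (borel_ext (borel_compl (borel_empty K M))) => z; tauto.
by apply: (borel_ext (borel_empty K M)) => z; tauto.
Qed.

Lemma borel_point_preimage (c : K) (P : K -> Prop) :
  infinite_type K -> card_le K M -> borel M (fun eta => P (eta c)).
Proof.
move=> Kinf KleM.
have small : card_le {k | P k} M := card_le_trans (card_le_sig P) KleM.
have basic (k : {k | P k}) : borel M (fun eta => forall x, x = c -> eta x = sval k).
  by apply: borel_basic; exact: infinite_singleton_small.
apply: (borel_ext (borel_union small basic)) => eta.
split=> [[[k Pk] /= eta_c]|Pc]; first by rewrite eta_c.
by exists (exist _ _ Pc) => x ->.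
Qed.

End Borel.

Section Satisfaction.
Variables (K V : Type) (ltK : K -> K -> Prop) (ar : nat -> nat) (iota : nat -> K)
          (pi : seq K -> K) (ltn : nat -> seq K -> seq K -> Prop) (eta : K -> K).

Local Notation sat := (sat ltK ar iota pi ltn eta).

Definition reassign (W : V -> Prop) (s' s : V -> K) (v : V) : K :=
  if excluded_middle_informative (W v) then s' v else s v.

Lemma reassign_off W s' s v : ~ W v -> reassign W s' s v = s v.
Proof. by rewrite /reassign; case: excluded_middle_informative. Qed.

Lemma reassign_agree W (p : formula K V) (s1 s2 s1' : V -> K) :
  (forall v, ~ W v /\ free p v -> s1 v = s2 v) ->
  (forall v, ~ W v -> s1' v = s1 v) ->
  forall v, free p v -> s1' v = reassign W s1' s2 v.
Proof.
move=> agree off v free_v; rewrite /reassign.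
by case: excluded_middle_informative => // not_W; rewrite off // agree.
Qed.

Lemma sat_free (phi : formula K V) (s1 s2 : V -> K) :
  (forall v, free phi v -> s1 v = s2 v) -> (sat s1 phi <-> sat s2 phi).
Proof.
elim: phi s1 s2 => /= [x y|m xs|xs ys|th xs|p IH|J ps IH|J ps IH|W p IH|W p IH] s1 s2 agree.
- by rewrite !agree; tauto.
- by rewrite (map_eq_in_list agree).
- by rewrite !(@map_eq_in_list _ _ s1 s2) // => v hv; apply: agree; tauto.
- by rewrite (map_eq_in_list agree).
- by rewrite (IH s1 s2 agree).
- by split=> sat_ps i; apply/(IH i s1 s2)/sat_ps => v hv; apply: agree; exists i.
- by split=> -[i sat_i]; exists i; apply/(IH i s1 s2)/sat_i => v hv; apply: agree; exists i.
- suff witness t1 t2 : (forall v, ~ W v /\ free p v -> t1 v = t2 v) ->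
      (exists s', (forall v, ~ W v -> s' v = t1 v) /\ sat s' p) ->
      exists s', (forall v, ~ W v -> s' v = t2 v) /\ sat s' p.
    by split; apply: witness => // v hv; rewrite agree.
  move=> agree_t [s' [off sat_s']]; exists (reassign W s' t2).
  split=> [v|]; first exact: reassign_off.
  by apply/(IH s')/sat_s'; exact: reassign_agree agree_t off.
- suff all_variants t1 t2 : (forall v, ~ W v /\ free p v -> t1 v = t2 v) ->
      (forall s', (forall v, ~ W v -> s' v = t1 v) -> sat s' p) ->
      forall s', (forall v, ~ W v -> s' v = t2 v) -> sat s' p.
    by split; apply: all_variants => // v hv; rewrite agree.
  move=> agree_t sat_t s' off.
  have agree_t' v : ~ W v /\ free p v -> t2 v = t1 v by move/agree_t.
  apply/(IH (reassign W s' t1))/sat_t; last exact: reassign_off.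
  by move=> v /(reassign_agree agree_t' off) ->.
Qed.

Lemma sentence_sat (phi : formula K V) (s0 : V -> K) :
  sentence phi -> (forall s, sat s phi) <-> sat s0 phi.
Proof.
move=> closed; split=> [|sat_s0 s]; first exact.
by apply/(sat_free (s1 := s0)) => // v /closed.
Qed.

End Satisfaction.

Section SatBorel.
Variables (K L V : Type) (ltK : K -> K -> Prop) (ltL : L -> L -> Prop) (ar : nat -> nat)
          (iota : nat -> K) (pi : seq K -> K) (ltn : nat -> seq K -> seq K -> Prop).
Hypotheses (woL : well_order ltL) (Kinf : infinite_type K) (Linf : infinite_type L).

Local Notation M := (KLess K ltL).

Lemma card_le_variants (W : V -> Prop) (s : V -> K) :
  card_lt {v | W v} L -> card_le {s' : V -> K | forall v, ~ W v -> s' v = s v} M.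
Proof.
move=> small_W; case: Kinf => i _.
apply: card_le_trans (card_le_fun_KLess woL (inhabits (i 0)) small_W).
exists (fun s' (w : {v | W v}) => sval s' (sval w)) => s1 s2 eq_W.
apply/sval_inj/functional_extensionality => v; have [Wv|nWv] := classic (W v).
  exact: (f_equal (@^~ (exist _ v Wv)) eq_W).
by rewrite (svalP s1 v nWv) (svalP s2 v nWv).
Qed.

Lemma borel_sat (phi : formula K V) (s : V -> K) : in_logic L ltK ar phi ->
  borel M (fun eta => sat ltK ar iota pi ltn eta s phi).
Proof.
have KleM := card_le_KLess woL Kinf Linf.
elim: phi s => /= [x y|m xs|xs ys|th xs|p IH|J ps IH|J ps IH|W p IH|W p IH] s.
- by move=> _; exact: borel_const.
- move=> _; pose c := pi (iota m :: map s xs).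
  exact: (borel_point_preimage c (fun k => size (map s xs) = ar m /\ ltK (iota 0) k) Kinf KleM).
- by move=> _; exact: borel_const.
- by move=> _; exact: borel_const.
- by move=> p_in; apply: borel_compl; exact: IH.
- by move=> [JleK ps_in]; apply: borel_inter (card_le_trans JleK KleM) _ => i; exact: IH.
- by move=> [JleK ps_in]; apply: borel_union (card_le_trans JleK KleM) _ => i; exact: IH.
- move=> [small_W p_in].
  apply: (borel_ext (borel_union (card_le_variants s small_W) (fun s' => IH (sval s') p_in))).
  by move=> eta; split=> [[[s' off] /= ?]|[s' [off ?]]]; [exists s' | exists (exist _ s' off)].
- move=> [small_W p_in].
  apply: (borel_ext (borel_inter (card_le_variants s small_W) (fun s' => IH (sval s') p_in))).
  move=> eta; split=> [sat_all s' off|sat_all [s' off]]; last exact: sat_all.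
  exact: sat_all (exist _ s' off).
Qed.

End SatBorel.

Theorem lemma5p1
  (K : Type) (ltK : K -> K -> Prop)
  (HK : is_cardinal ltK) (HKinf : infinite_type K) (HKreg : regular ltK)
  (L : Type) (ltL : L -> L -> Prop)
  (HL : is_cardinal ltL) (HLinf : infinite_type L)
  (iota : nat -> K) (Hiota : finite_ordinals ltK iota)
  (ar : nat -> nat)
  (pi : seq K -> K) (Hpi : bijective pi)
  (ltn : nat -> seq K -> seq K -> Prop)
  (Hltn : forall n, 0 < n -> ordertype_kappa ltK n (ltn n))
  (X : (K -> K) -> Prop) :
  (exists (V : Type) (phi : formula K V),
      in_logic L ltK ar phi /\ sentence phi /\
      forall eta : K -> K, X eta <-> models ltK ar iota pi ltn eta phi) ->
  borel (KLess K ltL) X.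
Proof.
move=> [V [phi [phi_in [closed X_def]]]].
pose s0 (_ : V) := iota 0.
apply: (borel_ext (borel_sat iota pi ltn (proj1 HL) HKinf HLinf s0 phi_in)) => eta.
by rewrite X_def; symmetry; exact: sentence_sat closed.
Qed.
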